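(* Let $\mathcal{Q}\subseteq\mathbb{R}^n$ and consider the robotic system $\mathbf{D}(\mathbf{q})\ddot{\mathbf{q}}+\mathbf{C}(\mathbf{q},\dot{\mathbf{q}})\dot{\mathbf{q}}+\mathbf{G}(\mathbf{q})=\mathbf{B}\mathbf{u}$, $\mathbf{u}\in\mathbb{R}^m$. Let $h_0:\mathcal{Q}\to\mathbb{R}$ and $\mathbf{k}_0:\mathcal{Q}\to\mathbb{R}^n$ be continuously differentiable, $\mu>0$, and $$h(\mathbf{q},\dot{\mathbf{q}})=h_0(\mathbf{q})-\frac{1}{2\mu}(\dot{\mathbf{q}}-\mathbf{k}_0(\mathbf{q}))^\top\mathbf{D}(\mathbf{q})(\dot{\mathbf{q}}-\mathbf{k}_0(\mathbf{q})),\qquad \mathcal{C}=\{(\mathbf{q},\dot{\mathbf{q}})\in T\mathcal{Q}:h(\mathbf{q},\dot{\mathbf{q}})\ge0\}.$$ If $h$ is an energy-based control barrier function for the robotic system on $\mathcal{C}$ (with extended class $\mathcal{K}_\infty$ function $\alpha$), then any locally Lipschitz controller $\mathbf{k}:T\mathcal{Q}\to\mathbb{R}^m$ satisfying, for all $(\mathbf{q},\dot{\mathbf{q}})\in T\mathcal{Q}$, $$\tfrac{1}{\mu}(\dot{\mathbf{q}}-\mathbf{k}_0(\mathbf{q}))^\top\Big[\mathbf{D}(\mathbf{q})\tfrac{\partial\mathbf{k}_0}{\partial\mathbf{q}}(\mathbf{q})\dot{\mathbf{q}}+\mathbf{C}(\mathbf{q},\dot{\mathbf{q}})\mathbf{k}_0(\mathbf{q})+\mathbf{G}(\mathbf{q})-\mathbf{B}\mathbf{k}(\mathbf{q},\dot{\mathbf{q}})\Big]+\nabla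 h_0(\mathbf{q})\cdot\dot{\mathbf{q}}\ge-\alpha(h(\mathbf{q},\dot{\mathbf{q}}))$$ renders $\mathcal{C}$ forward invariant for the closed-loop system obtained with $\mathbf{u}=\mathbf{k}(\mathbf{q},\dot{\mathbf{q}})$.
   Context: $\mathbf{D}(\mathbf{q})$ is the positive definite (continuously differentiable) inertia matrix, $\mathbf{C}$ the Coriolis matrix, $\mathbf{G}$ the gravity term, $\mathbf{B}\in\mathbb{R}^{n\times m}$ the actuation matrix; the inertia and Coriolis matrices satisfy the skew-symmetry property $\mathbf{v}^\top(\dot{\mathbf{D}}(\mathbf{q},\dot{\mathbf{q}})-2\mathbf{C}(\mathbf{q},\dot{\mathbf{q}}))\mathbf{v}=0$ for all $(\mathbf{q},\dot{\mathbf{q}})$ and $\mathbf{v}\in\mathbb{R}^n$. An extended class $\mathcal{K}_\infty$ function is a continuous strictly increasing $\alpha:\mathbb{R}\to\mathbb{R}$ with $\alpha(0)=0$ and $\alpha(s)\to\pm\infty$ as $s\to\pm\infty$. $h$ is an energy-based CBF on $\mathcal{C}$ if there is such an $\alpha$ with, for all $(\mathbf{q},\dot{\mathbf{q}})$, $\sup_{\mathbf{u}\in\mathbb{R}^m}\{\tfrac{1}{\mu}(\dot{\mathbf{q}}-\mathbf{k}_0)^\top[\mathbf{D}\tfrac{\partial\mathbf{k}_0}{\partial\mathbf{q}}\dot{\mathbf{q}}+\mathbf{C}\mathbf{k}_0+\mathbf{G}-\mathbf{B}\mathbf{u}]+\nabla h_0\cdot\dot{\mathbf{q}}\}>-\alpha(h)$.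 A set is forward invariant if every closed-loop trajectory starting in it remains in it on its whole maximal interval of existence. *)

From HB Require Import structures.
From mathcomp Require Import all_boot all_order all_algebra.
From mathcomp Require Import all_classical all_reals all_analysis.
Set Implicit Arguments. Unset Strict Implicit. Unset Printing Implicit Defensive.
Import Order.TTheory GRing.Theory Num.Theory.
Import numFieldNormedType.Exports.
Local Open Scope classical_set_scope.
Local Open Scope ring_scope.

Section Defs.
Variables (R : realType) (n m : nat).

Definition qform (u : 'cV[R]_n) (M : 'M[R]_n) (v : 'cV[R]_n) : R :=
  (u^T *m M *m v) ord0 ord0.

Definition dotv (u v : 'cV[R]_n) : R := (u^T *m v) ord0 ord0.

Definition C1_on {W : normedModType R} (Q : set 'cV[R]_n) (f : 'cV[R]_n -> W) :=
  (forall q, Q q -> differentiable f q) /\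
  (forall w : 'cV[R]_n, {within Q, continuous (fun q => 'd f q w)}).

Definition robot_assumptions (Q : set 'cV[R]_n) (D : 'cV[R]_n -> 'M[R]_n)
    (C : 'cV[R]_n -> 'cV[R]_n -> 'M[R]_n) : Prop :=
  [/\
      (forall q, Q q -> (D q)^T = D q),
      (forall q v, Q q -> v != 0 -> 0 < qform v (D q) v),
      C1_on Q D &
      (* skew-symmetry: v^T (Ddot(q,qd) - 2 C(q,qd)) v = 0, Ddot(q,qd) = dD(q)[qd] *)
      (forall q qd v, Q q -> qform v ('d D q qd - 2%:R *: C q qd) v = 0)].

Definition ext_classKinf (alpha : R -> R) : Prop :=
  [/\ continuous alpha,
      (forall x y, x < y -> alpha x < alpha y),
      alpha 0 = 0,
      (forall M, exists N, forall x, N < x -> M < alpha x) &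
      (forall M, exists N, forall x, x < N -> alpha x < M)].

Definition hE (D : 'cV[R]_n -> 'M[R]_n) (h0 : 'cV[R]_n -> R)
    (k0 : 'cV[R]_n -> 'cV[R]_n) (mu : R) (q qd : 'cV[R]_n) : R :=
  h0 q - (2 * mu)^-1 * qform (qd - k0 q) (D q) (qd - k0 q).

(* the safe set C = {(q,qd) in TQ | h(q,qd) >= 0}, TQ = Q x R^n *)
Definition safe_set (Q : set 'cV[R]_n) (D : 'cV[R]_n -> 'M[R]_n) (h0 : 'cV[R]_n -> R)
    (k0 : 'cV[R]_n -> 'cV[R]_n) (mu : R) : set ('cV[R]_n * 'cV[R]_n) :=
  [set x | Q x.1 /\ 0 <= hE D h0 k0 mu x.1 x.2].

Definition hdot_expr (D : 'cV[R]_n -> 'M[R]_n) (C : 'cV[R]_n -> 'cV[R]_n -> 'M[R]_n)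
    (G : 'cV[R]_n -> 'cV[R]_n) (B : 'M[R]_(n, m)) (h0 : 'cV[R]_n -> R)
    (k0 : 'cV[R]_n -> 'cV[R]_n) (mu : R) (q qd : 'cV[R]_n) (u : 'cV[R]_m) : R :=
  mu^-1 * dotv (qd - k0 q)
    (D q *m ('d k0 q qd) + C q qd *m k0 q + G q - B *m u)
  + 'd h0 q qd.

Definition energy_CBF (Q : set 'cV[R]_n) (D : 'cV[R]_n -> 'M[R]_n)
    (C : 'cV[R]_n -> 'cV[R]_n -> 'M[R]_n) (G : 'cV[R]_n -> 'cV[R]_n)
    (B : 'M[R]_(n, m)) (h0 : 'cV[R]_n -> R) (k0 : 'cV[R]_n -> 'cV[R]_n) (mu : R)
    (alpha : R -> R) : Prop :=
  ext_classKinf alpha /\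
  forall q qd, Q q ->
    ((- alpha (hE D h0 k0 mu q qd))%:E <
      ereal_sup [set (hdot_expr D C G B h0 k0 mu q qd u)%:E | u in [set: 'cV[R]_m]])%E.

Definition locally_lipschitz_on (Q : set 'cV[R]_n)
    (k : 'cV[R]_n -> 'cV[R]_n -> 'cV[R]_m) : Prop :=
  forall q qd, Q q -> exists eps : R, exists L : R, 0 < eps /\
    forall q1 qd1 q2 qd2, Q q1 -> Q q2 ->
      `|q1 - q| < eps -> `|qd1 - qd| < eps ->
      `|q2 - q| < eps -> `|qd2 - qd| < eps ->
      `|k q1 qd1 - k q2 qd2| <= L * (`|q1 - q2| + `|qd1 - qd2|).

Definition cl_solution (Q : set 'cV[R]_n) (D : 'cV[R]_n -> 'M[R]_n)
    (C : 'cV[R]_n -> 'cV[R]_n -> 'M[R]_n) (G : 'cV[R]_n -> 'cV[R]_n)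
    (B : 'M[R]_(n, m)) (k : 'cV[R]_n -> 'cV[R]_n -> 'cV[R]_m)
    (T : R) (q qd : R -> 'cV[R]_n) : Prop :=
  [/\ (forall t, 0 <= t < T -> Q (q t)),
      {within [set t | 0 <= t < T], continuous q},
      {within [set t | 0 <= t < T], continuous qd} &
      (forall t, 0 < t < T ->
         [/\ is_derive t 1 q (qd t), derivable qd t 1 &
             D (q t) *m 'D_1 qd t + C (q t) (qd t) *m qd t + G (q t)
               = B *m k (q t) (qd t)])].

(* forward invariance: every closed-loop trajectory starting in S stays in S on
   its interval of existence (any [0,T), hence the maximal one). *)
Definition forward_invariant (Q : set 'cV[R]_n) (D : 'cV[R]_n -> 'M[R]_n)
    (C : 'cV[R]_n -> 'cV[R]_n -> 'M[R]_n) (G : 'cV[R]_n -> 'cV[R]_n)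
    (B : 'M[R]_(n, m)) (k : 'cV[R]_n -> 'cV[R]_n -> 'cV[R]_m)
    (S : set ('cV[R]_n * 'cV[R]_n)) : Prop :=
  forall (T : R) (q qd : R -> 'cV[R]_n), 0 < T ->
    cl_solution Q D C G B k T q qd -> S (q 0, qd 0) ->
    forall t, 0 <= t < T -> S (q t, qd t).

End Defs.

From HB Require Import structures.
From mathcomp Require Import all_boot all_order all_algebra.
From mathcomp Require Import all_classical all_reals all_analysis.
From mathcomp Require Import ring lra.
Import Order.TTheory GRing.Theory Num.Theory.
Import numFieldNormedType.Exports.
Local Open Scope classical_set_scope.
Local Open Scope ring_scope.
Set Implicit Arguments. Unset Strict Implicit. Unset Printing Implicit Defensive.

(* Along a closed-loop trajectory, the skew-symmetry of dD/dt - 2C turns the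
   time derivative of h into exactly the left-hand side of the controller
   condition, so dh/dt >= -alpha(h) > 0 wherever h < 0.  A real function that
   is nonnegative at time 0 and never decreases while negative stays nonnegative:
   after the last time it was nonnegative it would have to decrease to become
   negative. *)

Section MatrixDerive.
Context {R : realFieldType} {V : normedModType R}.

Lemma is_derive_mx a b (M : V -> 'M[R]_(a, b)) (dM : 'M[R]_(a, b)) x v :
  (forall i j, is_derive x v (fun y => M y i j) (dM i j)) -> is_derive x v M dM.
Proof.
move=> dMij; have dMx : derivable M x v.
  by apply/derivable_mxP => i j; exact: ex_derive.
apply: DeriveDef => //; rewrite derive_mx //.
by apply/matrixP => i j; rewrite mxE derive_val.
Qed.

Lemma is_derive_mx_entry a b (M : V -> 'M[R]_(a, b)) (dM : 'M[R]_(a, b)) x v i j :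
  is_derive x v M dM -> is_derive x v (fun y => M y i j) (dM i j).
Proof.
case=> dMx <-; apply: DeriveDef; first by move/derivable_mxP: dMx.
by rewrite (derive_mx dMx) mxE.
Qed.

Lemma is_derive_trmx a b (M : V -> 'M[R]_(a, b)) (dM : 'M[R]_(a, b)) x v :
  is_derive x v M dM -> is_derive x v (fun y => (M y)^T) dM^T.
Proof.
move=> dMx; apply: is_derive_mx => i j; rewrite mxE.
have -> : (fun y => (M y)^T i j) = (fun y => M y j i).
  by apply/funext => y; rewrite mxE.
exact: is_derive_mx_entry.
Qed.

Lemma is_derive_mulmx a b c (M : V -> 'M[R]_(a, b)) (N : V -> 'M[R]_(b, c))
    (dM : 'M[R]_(a, b)) (dN : 'M[R]_(b, c)) x v :
  is_derive x v M dM -> is_derive x v N dN ->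
  is_derive x v (fun y => M y *m N y) (dM *m N x + M x *m dN).
Proof.
move=> dMx dNx; apply: is_derive_mx => i j.
have -> : (fun y => (M y *m N y) i j) =
    \sum_(k < b) ((fun y => M y i k) * (fun y => N y k j)).
  by apply/funext => y; rewrite mxE fct_sumE.
apply: is_derive_eq.
  by apply: is_derive_sum => k; apply: is_deriveM; exact: is_derive_mx_entry.
rewrite !mxE -big_split /=; apply: eq_bigr => k _.
by rewrite addrC [_ *: dM i k]mulrC.
Qed.

End MatrixDerive.

Lemma is_derive_diff_comp {R : realFieldType} {V W : normedModType R}
    (f : V -> W) (q : R -> V) (dq : V) t :
  differentiable f (q t) -> is_derive t 1 q dq ->
  is_derive t 1 (f \o q) ('d f (q t) dq).
Proof.
move=> df dqt; have dq_t : differentiable q t.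
  by apply/derivable1_diffP; case: dqt.
have dfq : differentiable (f \o q) t by exact: differentiable_comp.
apply: DeriveDef; first exact/derivable1_diffP.
rewrite deriveE // diff_comp //=; congr ('d f (q t) _).
by rewrite -deriveE //; case: dqt.
Qed.

Section QuadraticForm.
Variables (R : realType) (n : nat).
Implicit Types (u v w : 'cV[R]_n) (M : 'M[R]_n).

Lemma qform_dotv u M v : qform u M v = dotv u (M *m v).
Proof. by rewrite /qform /dotv mulmxA. Qed.

Lemma qformC u M v : M^T = M -> qform u M v = qform v M u.
Proof.
move=> M_sym; have tr11 (X : 'M[R]_1) : X ord0 ord0 = X^T ord0 ord0 by rewrite mxE.
by rewrite /qform tr11 !trmx_mul trmxK M_sym mulmxA.
Qed.

Lemma dotvDr u v w : dotv u (v + w) = dotv u v + dotv u w.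
Proof. by rewrite /dotv mulmxDr mxE. Qed.

Lemma dotvNr u v : dotv u (- v) = - dotv u v.
Proof. by rewrite /dotv mulmxN mxE. Qed.

Lemma dotvZr u (c : R) v : dotv u (c *: v) = c * dotv u v.
Proof. by rewrite /dotv -scalemxAr mxE. Qed.

Lemma qformE u M v :
  qform u M v = \sum_j (\sum_i u i ord0 * M i j) * v j ord0.
Proof.
rewrite /qform !mxE; apply: eq_bigr => j _; rewrite !mxE; congr (_ * _).
by apply: eq_bigr => i _; rewrite !mxE.
Qed.

Lemma cvg_qform T (F : set_system T) {FF : Filter F}
    (u w : T -> 'cV[R]_n) (M : T -> 'M[R]_n) u0 M0 w0 :
  u @ F --> u0 -> M @ F --> M0 -> w @ F --> w0 ->
  (fun s => qform (u s) (M s) (w s)) @ F --> qform u0 M0 w0.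
Proof.
have entry a b (X : T -> 'M[R]_(a, b)) (X0 : 'M[R]_(a, b)) i j :
    X @ F --> X0 -> (fun s => X s i j) @ F --> X0 i j.
  move=> cX; apply: (@cvg_comp _ _ _ X (fun Y : 'M[R]_(a, b) => Y i j) _ _ _ cX).
  exact: coord_continuous.
move=> cu cM cw; rewrite qformE; under eq_cvg do rewrite qformE.
apply: cvg_big => //; first exact: add_continuous.
move=> j _; apply: cvgM; last exact: entry.
apply: cvg_big => //; first exact: add_continuous.
by move=> i _; apply: cvgM; exact: entry.
Qed.

Lemma is_derive_qform {V : normedModType R} (u : V -> 'cV[R]_n)
    (M : V -> 'M[R]_n) (du : 'cV[R]_n) (dM : 'M[R]_n) (x v : V) :
  is_derive x v u du -> is_derive x v M dM ->
  is_derive x v (fun y => qform (u y) (M y) (u y))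
    (qform du (M x) (u x) + qform (u x) dM (u x) + qform (u x) (M x) du).
Proof.
move=> dux dMx; apply: is_derive_eq.
  apply: is_derive_mx_entry; apply: (is_derive_mulmx _ dux).
  exact: is_derive_mulmx (is_derive_trmx dux) dMx.
by rewrite /qform mulmxDl !mxE.
Qed.

End QuadraticForm.

Section NonnegativeBarrier.
Context {R : realType}.
Variables (H : R -> R) (a b : R).
Hypothesis H_cont : {within `[a, b[, continuous H}.

Lemma last_nonneg_point t : a <= t < b -> 0 <= H a ->
  exists2 s, (a <= s <= t) && (0 <= H s) & forall x, s < x <= t -> H x < 0.
Proof.
move=> /andP[ta tb] Ha; pose S := [set x | (a <= x <= t) && (0 <= H x)].
have Sa : S a by rewrite /S /= lexx ta Ha.
have S_ub : ubound S t by move=> x /andP[/andP[]].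
have supS : has_sup S by split; [exists a | exists t].
pose s := sup S; have sa : a <= s by exact: sup_upper_bound.
have st : s <= t by apply: ge_sup; first exists a.
exists s; last first.
  move=> x /andP[sx xt]; rewrite ltNge; apply/negP => Hx.
  have xs : x <= s by apply: sup_upper_bound => //; rewrite /S /= (le_trans sa (ltW sx)) xt.
  by rewrite ltNge xs in sx.
rewrite sa st /= leNgt; apply/negP => Hs.
have sI : s \in `[a, b[ by rewrite in_itv /= sa (le_lt_trans st tb).
have /(_ s sI) cHs := (subspace_continuousP _ _).1 H_cont.
have [e /= e0 He] := (nbhs_ballP _ _).1 (cvgr_lt _ cHs _ Hs).
have [y /andP[/andP[ay yt] Hy] sy] := sup_adherent e0 supS.
have ys : y <= s by apply: sup_upper_bound => //; rewrite /S /= ay yt Hy.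
have : H y < 0.
  apply: He; last by rewrite /= in_itv /= ay (le_lt_trans yt tb).
  by rewrite /ball /= ger0_norm ?subr_ge0 // ltrBlDr addrC -ltrBlDr.
by rewrite ltNge Hy.
Qed.

Hypothesis H_derivable : forall x, a < x < b -> derivable H x 1.
Hypothesis H_rises_below0 : forall x, a < x < b -> H x < 0 -> 0 <= 'D_1 H x.

Lemma barrier_ge0 t : 0 <= H a -> a <= t < b -> 0 <= H t.
Proof.
move=> Ha /[dup] /andP[ta tb] tI; rewrite leNgt; apply/negP => Ht.
have [s /andP[/andP[sa st] Hs] Hneg] := last_nonneg_point tI Ha.
have xI x : x \in `]s, t[ -> a < x < b.
  by rewrite in_itv /= => /andP[sx xt]; rewrite (le_lt_trans sa sx) (lt_trans xt tb).
have : H s <= H t.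
  apply: (@ger0_derive1_le_cc _ H s t).
  - by move=> x /xI; exact: H_derivable.
  - move=> x /[dup] /xI xab; rewrite in_itv /= => /andP[sx xt].
    by rewrite derive1E; apply: H_rises_below0 xab _; apply: Hneg; rewrite sx ltW.
  - apply: continuous_subspaceW H_cont => x /=; rewrite !in_itv /= => /andP[sx xt].
    by rewrite (le_trans sa sx) (le_lt_trans xt tb).
  - by rewrite in_itv /= lexx st.
  - by rewrite in_itv /= lexx st.
  - exact: st.
by rewrite leNgt (lt_le_trans Ht Hs).
Qed.

End NonnegativeBarrier.

Section EnergyRate.
Variables (R : realType) (n m : nat) (Q : set 'cV[R]_n) (D : 'cV[R]_n -> 'M[R]_n)
  (C : 'cV[R]_n -> 'cV[R]_n -> 'M[R]_n) (G : 'cV[R]_n -> 'cV[R]_n)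
  (B : 'M[R]_(n, m)) (h0 : 'cV[R]_n -> R) (k0 : 'cV[R]_n -> 'cV[R]_n) (mu : R).

Lemma qform_rate_skew (e de : 'cV[R]_n) (M dM Cm : 'M[R]_n) :
  M^T = M -> qform e (dM - 2%:R *: Cm) e = 0 ->
  qform de M e + qform e dM e + qform e M de = 2 * dotv e (M *m de + Cm *m e).
Proof.
move=> M_sym skew; have {skew} : dotv e (dM *m e) = 2 * dotv e (Cm *m e).
  move: skew; rewrite qform_dotv mulmxBl -scalemxAl dotvDr dotvNr dotvZr.
  by move/eqP; rewrite subr_eq0 => /eqP.
rewrite qformC // !qform_dotv dotvDr => ->; ring.
Qed.

Lemma error_dynamics (M Cm : 'M[R]_n) (qd qdd k dk g : 'cV[R]_n) (u : 'cV[R]_m) :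
  M *m qdd + Cm *m qd + g = B *m u ->
  M *m (qdd - dk) + Cm *m (qd - k) = - (M *m dk + Cm *m k + g - B *m u).
Proof.
move=> <-; rewrite !mulmxBr.
set a := M *m qdd; set b := M *m dk; set c := Cm *m qd; set d := Cm *m k.
by apply/matrixP => i j; rewrite !mxE; lra.
Qed.

Hypothesis D_sym : forall p, Q p -> (D p)^T = D p.
Hypothesis D_skew : forall p v w, Q p -> qform w ('d D p v - 2%:R *: C p v) w = 0.
Hypothesis D_diff : forall p, Q p -> differentiable D p.
Hypothesis h0_diff : forall p, Q p -> differentiable h0 p.
Hypothesis k0_diff : forall p, Q p -> differentiable k0 p.

Lemma is_derive_hE (q qd : R -> 'cV[R]_n) (qdd : 'cV[R]_n) (u : 'cV[R]_m) t :
  mu != 0 -> Q (q t) -> is_derive t 1 q (qd t) -> is_derive t 1 qd qdd ->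
  D (q t) *m qdd + C (q t) (qd t) *m qd t + G (q t) = B *m u ->
  is_derive t 1 (fun s => hE D h0 k0 mu (q s) (qd s))
    (hdot_expr D C G B h0 k0 mu (q t) (qd t) u).
Proof.
move=> mu_neq0 Qqt dq dqd dynamics.
have dh0 := is_derive_diff_comp (h0_diff Qqt) dq.
have dk0 := is_derive_diff_comp (k0_diff Qqt) dq.
have dD := is_derive_diff_comp (D_diff Qqt) dq.
have de : is_derive t 1 (qd - (k0 \o q)) (qdd - 'd k0 (q t) (qd t)) by exact: is_deriveB.
have dV := is_derive_qform de dD.
apply: (is_derive_eq (is_deriveB dh0 (is_deriveZ ((2 * mu)^-1) dV))).
rewrite /= (qform_rate_skew _ (D_sym Qqt) (D_skew (qd t) _ Qqt)).
rewrite (error_dynamics _ _ dynamics) dotvNr /hdot_expr /GRing.scale /=.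
by field.
Qed.

Lemma continuous_hE (A : set R) (q qd : R -> 'cV[R]_n) :
  (forall s, A s -> Q (q s)) -> {within A, continuous q} -> {within A, continuous qd} ->
  {within A, continuous (fun s => hE D h0 k0 mu (q s) (qd s))}.
Proof.
move=> AQ cq cqd; apply/subspace_continuousP => s As.
have /(_ s As) cq_s := (subspace_continuousP _ _).1 cq.
have /(_ s As) cqd_s := (subspace_continuousP _ _).1 cqd.
have cont_at f : differentiable f (q s) -> f \o q @ within A (nbhs s) --> f (q s).
  by move=> df; exact: cvg_comp cq_s (differentiable_continuous df).
have ce : (fun s => qd s - k0 (q s)) @ within A (nbhs s) --> qd s - k0 (q s).
  by apply: cvgB; [exact: cqd_s | exact: cont_at (k0_diff (AQ _ As))].
apply: cvgB; first exact: cont_at (h0_diff (AQ _ As)).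
apply: cvgMl_tmp; apply: (cvg_qform ce _ ce).
exact: (cont_at _ D (D_diff (AQ _ As))).
Qed.

End EnergyRate.

Theorem theorem9 (R : realType) (n m : nat) (Q : set 'cV[R]_n)
  (D : 'cV[R]_n -> 'M[R]_n) (C : 'cV[R]_n -> 'cV[R]_n -> 'M[R]_n)
  (G : 'cV[R]_n -> 'cV[R]_n) (B : 'M[R]_(n, m))
  (h0 : 'cV[R]_n -> R) (k0 : 'cV[R]_n -> 'cV[R]_n) (mu : R) (alpha : R -> R)
  (k : 'cV[R]_n -> 'cV[R]_n -> 'cV[R]_m) :
  robot_assumptions Q D C ->
  C1_on Q h0 -> C1_on Q k0 -> 0 < mu ->
  energy_CBF Q D C G B h0 k0 mu alpha ->
  locally_lipschitz_on Q k ->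
  (forall q qd, Q q ->
     - alpha (hE D h0 k0 mu q qd) <= hdot_expr D C G B h0 k0 mu q qd (k q qd)) ->
  forward_invariant Q D C G B k (safe_set Q D h0 k0 mu).
Proof.
(* The CBF property only guarantees that controllers such as k exist, and the
   Lipschitz continuity of k only gives existence and uniqueness of
   trajectories. *)
move=> [D_sym _ [D_diff _] D_skew] [h0_diff _] [k0_diff _] mu_gt0.
move=> [[_ alpha_mono alpha0 _ _] _] _ k_safe T q qd _ [Qq cq cqd sol] [_ H0] t tI.
split; first exact: Qq.
pose H s := hE D h0 k0 mu (q s) (qd s).
have dH s : 0 < s < T ->
    is_derive s 1 H (hdot_expr D C G B h0 k0 mu (q s) (qd s) (k (q s) (qd s))).
  move=> sI; have [dq /derivableP dqd dyn] := sol s sI.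
  apply: (is_derive_hE D_sym D_skew D_diff h0_diff k0_diff) dq dqd dyn.
  - by rewrite gt_eqF.
  - by apply: Qq; case/andP: sI => /ltW -> ->.
apply: (@barrier_ge0 _ H 0 T) => //.
- have -> : [set` `[0, T[] = [set s | 0 <= s < T].
    by apply/seteqP; split => s; rewrite /= in_itv.
  exact: (continuous_hE D_diff h0_diff k0_diff Qq cq cqd).
- by move=> s /dH [].
- move=> s sI Hs; have [_ ->] := dH s sI; apply: le_trans (k_safe _ _ _).
    by rewrite oppr_ge0 -alpha0 ltW // alpha_mono.
  by apply: Qq; case/andP: sI => /ltW -> ->.
Qed.
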